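(* Let $k\in\mathbb N$, let $I$ be an interval of length $|I|=b$, and let $g\in C^k(I,\mathbb R)$ satisfy $\|g^{(m)}\|_\infty\le c_m$ for $m=0,\dots,k$, where $c_0<1$. Let $\epsilon>0$ and assume $k\ge1/\epsilon$ and $b\le c_0^{\epsilon}$. Then there are constants $\tilde C_m(\epsilon)\ge0$, $m=0,\dots,k$, depending only on $\epsilon$ and on $c_1,\dots,c_k$ (and increasing in the $c_j$), but not on $b$ or $c_0$, such that $$\|g^{(m)}\|_\infty\le c_0\,\tilde C_m(\epsilon)\,b^{-m},\qquad m=0,\dots,k.$$
   Context: $\|\cdot\|_\infty$ is the supremum norm over $I$. *)

From Stdlib Require Import Reals.
From Coquelicot Require Import Coquelicot.
Open Scope R_scope.

Definition in_I (a b x : R) : Prop := a < x < a + b.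

Definition Ck_on (k : nat) (a b : R) (g : R -> R) : Prop :=
  (forall m x, (m <= k)%nat -> in_I a b x -> ex_derive_n g m x) /\
  (forall x, in_I a b x -> continuous (Derive_n g k) x).

Definition supnorm_le (a b : R) (h : R -> R) (c : R) : Prop :=
  forall x, in_I a b x -> Rabs (h x) <= c.

(* The heart of the proof is a Landau–Kolmogorov type interpolation inequality
   on an interval I of length L: for every n >= 1 there are constants A_j,
   depending only on n, such that whenever |f| <= P and |f^(n)| <= Q on I
   (all derivatives of order <= n being bounded on I), then for every scale
   0 < h <= L and every j <= n,
        |f^(j)| <= A_j (P h^-j + h^(n-j) Q).  The inductive step bounds f' first: the
   two-point Landau estimate |f'| <= 2P/d + d sup|f''| (mean value theorem
   twice, at a small scale d = delta h), combined with the induction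
   hypothesis applied to f', shows that every bound B on |f'| improves to
   beta + B/2; since f' is bounded, |f'| <= 2 beta.  The higher derivatives
   then follow from the induction hypothesis applied to f'.

   The theorem takes h = b = |I| and n = k: the hypothesis b <= c_0^eps with
   k >= 1/eps gives b^k <= c_0, so b^(k-m) c_k <= c_0 b^-m and
   |g^(m)| <= c_0 A_m (1 + c_k) b^-m.  (When c_0 = 0, g vanishes on I.) *)

From Stdlib Require Import Reals Lra Lia.
From Coquelicot Require Import Coquelicot.
Open Scope R_scope.

Lemma Derive_n_Derive (f : R -> R) (j : nat) :
  Derive_n (Derive f) j = Derive_n f (S j).
Proof. induction j as [|j IH]; simpl; [reflexivity | now rewrite IH]. Qed.

(* f has derivatives of all orders < n on I = (a, a+L), i.e. derivatives of
   orders <= n exist there. *)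
Definition derivable_upto (n : nat) (a L : R) (f : R -> R) : Prop :=
  forall j x, (j < n)%nat -> in_I a L x -> ex_derive (Derive_n f j) x.

Definition bounded_upto (n : nat) (a L : R) (f : R -> R) : Prop :=
  forall j, (j <= n)%nat -> exists B, supnorm_le a L (Derive_n f j) B.

Lemma derivable_upto_Derive n a L f :
  derivable_upto (S n) a L f -> derivable_upto n a L (Derive f).
Proof.
  intros Hf j x hj hx; rewrite Derive_n_Derive; apply Hf; [lia | exact hx].
Qed.

Lemma bounded_upto_Derive n a L f :
  bounded_upto (S n) a L f -> bounded_upto n a L (Derive f).
Proof. intros Hf j hj; rewrite Derive_n_Derive; apply Hf; lia. Qed.

Lemma supnorm_nonneg a L F B : 0 < L -> supnorm_le a L F B -> 0 <= B.
Proof.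
  intros hL HB.
  assert (hm : in_I a L (a + L / 2)) by (unfold in_I; lra).
  pose proof (HB _ hm); pose proof (Rabs_pos (F (a + L / 2))); lra.
Qed.

Lemma in_I_between a L u v c :
  in_I a L u -> in_I a L v -> Rmin u v <= c <= Rmax u v -> in_I a L c.
Proof. unfold in_I, Rmin, Rmax; intros; destruct (Rle_dec u v); lra. Qed.

Lemma mvt_on_I a L F u v :
  (forall y, in_I a L y -> ex_derive F y) -> in_I a L u -> in_I a L v ->
  exists c, Rmin u v <= c <= Rmax u v /\ F v - F u = Derive F c * (v - u).
Proof.
  intros HF hu hv.
  assert (Hc : forall y, Rmin u v <= y <= Rmax u v -> ex_derive F y)
    by (intros y hy; apply HF; exact (in_I_between a L u v y hu hv hy)).
  apply MVT_gen.
  - intros y hy; apply Derive_correct, Hc; lra.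
  - intros y hy; apply continuity_pt_filterlim.
    exact (ex_derive_continuous F y (Hc y hy)).
Qed.

Lemma partner_in_I a L x d :
  in_I a L x -> 0 < d -> 2 * d < L -> exists v, in_I a L v /\ Rabs (v - x) = d.
Proof.
  unfold in_I; intros hx hd hdL.
  destruct (Rle_dec x (a + L / 2)).
  - exists (x + d); split; [lra | rewrite Rabs_pos_eq; lra].
  - exists (x - d); split; [lra | rewrite Rabs_left; lra].
Qed.

Lemma landau_on_interval a L f P Q d x :
  0 < d -> 2 * d < L -> derivable_upto 2 a L f ->
  supnorm_le a L f P -> supnorm_le a L (Derive_n f 2) Q -> in_I a L x ->
  Rabs (Derive f x) <= 2 * P / d + d * Q.
Proof.
  intros hd hdL Hf HP HQ hx.
  destruct (partner_in_I a L x d hx hd hdL) as [v [hv hvx]].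
  destruct (mvt_on_I a L f x v (fun y => Hf 0%nat y ltac:(lia)) hx hv)
    as [c1 [hc1 Hmvt1]].
  assert (hc1I : in_I a L c1) by exact (in_I_between a L x v c1 hx hv hc1).
  destruct (mvt_on_I a L (Derive f) x c1 (fun y => Hf 1%nat y ltac:(lia)) hx hc1I)
    as [c2 [hc2 Hmvt2]].
  assert (hc2I : in_I a L c2) by exact (in_I_between a L x c1 c2 hx hc1I hc2).
  (* the secant slope between x and v is at most 2P/d *)
  assert (Hslope : Rabs (Derive f c1) * d <= 2 * P).
  { rewrite <- hvx, <- Rabs_mult, <- Hmvt1.
    pose proof (HP v hv); pose proof (HP x hx).
    pose proof (Rabs_triang (f v) (- f x)); rewrite Rabs_Ropp in *.
    unfold Rminus; lra. }
  assert (Hdrift : Rabs (Derive f c1 - Derive f x) <= Q * d).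
  { rewrite Hmvt2, Rabs_mult.
    apply Rmult_le_compat; try apply Rabs_pos; [exact (HQ c2 hc2I) |].
    rewrite <- hvx; revert hc1; unfold Rmin, Rmax, Rabs.
    destruct (Rle_dec x v); repeat destruct Rcase_abs; lra. }
  assert (Hslope' : Rabs (Derive f c1) <= 2 * P / d).
  { apply Rmult_le_reg_r with d; [exact hd |].
    replace (2 * P / d * d) with (2 * P) by (field; lra); exact Hslope. }
  pose proof (Rabs_triang (Derive f c1) (- (Derive f c1 - Derive f x))).
  rewrite Rabs_Ropp in *.
  replace (Derive f c1 + - (Derive f c1 - Derive f x)) with (Derive f x) in * by ring.
  lra.
Qed.

Lemma le_of_le_geometric (x y d : R) :
  (forall N, x <= y + d * (/ 2) ^ N) -> x <= y.
Proof.
  intros H.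
  assert (Hlim : Rbar_le x (y + d * 0)).
  { apply (is_lim_seq_le (fun _ => x) (fun N => y + d * (/ 2) ^ N));
      [exact H | apply is_lim_seq_const |].
    apply is_lim_seq_plus'; [apply is_lim_seq_const |].
    apply (is_lim_seq_scal_l _ d 0), is_lim_seq_geom.
    rewrite Rabs_pos_eq; lra. }
  simpl in Hlim; lra.
Qed.

Lemma absorb_half (S : R -> Prop) (F : R -> R) (beta B0 : R) :
  (forall x, S x -> Rabs (F x) <= B0) ->
  (forall B, (forall x, S x -> Rabs (F x) <= B) ->
     forall x, S x -> Rabs (F x) <= beta + B / 2) ->
  forall x, S x -> Rabs (F x) <= 2 * beta.
Proof.
  intros H0 Himprove.
  assert (Hiter : forall N x, S x ->
            Rabs (F x) <= 2 * beta + (B0 - 2 * beta) * (/ 2) ^ N).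
  { induction N as [|N IH]; intros x hx.
    - simpl; specialize (H0 x hx); lra.
    - specialize (Himprove _ IH x hx); simpl.
      replace (2 * beta + (B0 - 2 * beta) * (/ 2 * (/ 2) ^ N))
        with (beta + (2 * beta + (B0 - 2 * beta) * (/ 2) ^ N) / 2) by field.
      exact Himprove. }
  intros x hx; apply (le_of_le_geometric _ _ (B0 - 2 * beta)).
  intros N; exact (Hiter N x hx).
Qed.

Definition interpolates (n : nat) (A : nat -> R) : Prop :=
  forall a L f P Q h, 0 < h -> h <= L ->
    derivable_upto n a L f -> bounded_upto n a L f ->
    supnorm_le a L f P -> supnorm_le a L (Derive_n f n) Q ->
    forall j, (j <= n)%nat ->
      supnorm_le a L (Derive_n f j) (A j * (P / h ^ j + h ^ (n - j) * Q)).

Lemma interpolates_1 : interpolates 1 (fun _ => 1).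
Proof.
  intros a L f P Q h hh hL _ _ HP HQ j hj x hx.
  pose proof (supnorm_nonneg a L _ _ ltac:(lra) HP).
  pose proof (supnorm_nonneg a L _ _ ltac:(lra) HQ).
  assert (0 <= P / h) by (apply Rdiv_le_0_compat; lra).
  destruct j as [|[|j]]; [| | lia]; simpl.
  - specialize (HP x hx); simpl in HP.
    assert (0 <= h * 1 * Q) by (apply Rmult_le_pos; lra).
    replace (P / 1) with P by field; lra.
  - specialize (HQ x hx); simpl in HQ; rewrite Rmult_1_r; lra.
Qed.

Section Step.

Variables (n : nat) (A : nat -> R).
Hypothesis n_pos : (1 <= n)%nat.
Hypothesis A_nonneg : forall j, 0 <= A j.
Hypothesis A_interpolates : interpolates n A.

Definition first_constant : R := 8 * (1 + A 1%nat) + 1.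

(* Improvement of a bound B on f' at order n + 1: the Landau estimate at the
   small scale delta h, with |f''| controlled through the induction
   hypothesis for f', gives |f'| <= D (P/h + h^n Q) + B/2, D = first_constant. *)
Lemma first_derivative_improves a L f P Q h B :
  0 < h -> h <= L ->
  derivable_upto (S n) a L f -> bounded_upto (S n) a L f ->
  supnorm_le a L f P -> supnorm_le a L (Derive_n f (S n)) Q ->
  supnorm_le a L (Derive f) B ->
  supnorm_le a L (Derive f) (first_constant * (P / h + h ^ n * Q) + B / 2).
Proof.
  intros hh hL Hder Hbnd HP HQ HB x hx.
  pose proof (supnorm_nonneg a L _ _ ltac:(lra) HP) as hP.
  pose proof (supnorm_nonneg a L _ _ ltac:(lra) HQ) as hQ.
  pose proof (supnorm_nonneg a L _ _ ltac:(lra) HB) as hB.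
  pose proof (A_nonneg 1%nat) as hA1.
  set (delta := / (4 * (1 + A 1%nat))).
  assert (hdelta : 0 < delta) by (apply Rinv_0_lt_compat; lra).
  assert (hdA : delta * A 1%nat <= 1 / 4)
    by (unfold delta; apply Rmult_le_reg_l with (4 * (1 + A 1%nat)); [lra|];
        field_simplify; lra).
  assert (hdelta4 : delta <= 1 / 4)
    by (unfold delta; apply Rmult_le_reg_l with (4 * (1 + A 1%nat)); [lra|];
        field_simplify; lra).
  assert (Hf2 : supnorm_le a L (Derive_n f 2)
                  (A 1%nat * (B / h + h ^ (n - 1) * Q))).
  { pose proof (A_interpolates a L (Derive f) B Q h hh hL
                  (derivable_upto_Derive _ _ _ _ Hder)
                  (bounded_upto_Derive _ _ _ _ Hbnd) HB
                  ltac:(rewrite Derive_n_Derive; exact HQ) 1%nat n_pos) as H.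
    rewrite Derive_n_Derive, pow_1 in H; exact H. }
  pose proof (landau_on_interval a L f P _ (delta * h) x ltac:(nra) ltac:(nra)
                (fun j y hj => Hder j y ltac:(lia)) HP Hf2 hx) as Hx.
  assert (Hpow : h * h ^ (n - 1) = h ^ n)
    by (rewrite <- (pow_1 h) at 1; rewrite <- pow_add; f_equal; lia).
  assert (Hexpand : 2 * P / (delta * h) + delta * h * (A 1%nat * (B / h + h ^ (n - 1) * Q))
            = 8 * (1 + A 1%nat) * (P / h) + (delta * A 1%nat) * B
              + (delta * A 1%nat) * (h ^ n * Q)).
  { rewrite <- Hpow; unfold delta; field; lra. }
  rewrite Hexpand in Hx; unfold first_constant.
  assert (0 <= h ^ n * Q) by (apply Rmult_le_pos; [apply pow_le|]; lra).
  assert (0 <= P / h) by (apply Rdiv_le_0_compat; lra).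
  pose proof (Rmult_le_pos _ _ (Rlt_le _ _ hdelta) hA1); nra.
Qed.

(* Since f' is bounded, absorbing the B/2 term gives
   |f'| <= 2 D (P/h + h^n Q). *)
Lemma first_derivative_bound a L f P Q h :
  0 < h -> h <= L ->
  derivable_upto (S n) a L f -> bounded_upto (S n) a L f ->
  supnorm_le a L f P -> supnorm_le a L (Derive_n f (S n)) Q ->
  supnorm_le a L (Derive f) (2 * (first_constant * (P / h + h ^ n * Q))).
Proof.
  intros hh hL Hder Hbnd HP HQ x hx.
  destruct (Hbnd 1%nat ltac:(lia)) as [B0 HB0].
  apply (absorb_half (in_I a L) (Derive f) _ B0 HB0); [|exact hx].
  intros B HB; exact (first_derivative_improves a L f P Q h B hh hL Hder Hbnd HP HQ HB).
Qed.

Definition next_constants (j : nat) : R :=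
  match j with
  | O => 1
  | S j' => (2 * first_constant + 1) * A j'
  end.

Lemma next_constants_nonneg j : 0 <= next_constants j.
Proof.
  destruct j as [|j]; simpl; [lra|].
  apply Rmult_le_pos; [unfold first_constant; pose proof (A_nonneg 1%nat); lra | apply A_nonneg].
Qed.

Lemma interpolates_step : interpolates (S n) next_constants.
Proof.
  intros a L f P Q h hh hL Hder Hbnd HP HQ j hj x hx.
  pose proof (supnorm_nonneg a L _ _ ltac:(lra) HP) as hP.
  pose proof (supnorm_nonneg a L _ _ ltac:(lra) HQ) as hQ.
  destruct j as [|j]; simpl.
  - specialize (HP x hx); simpl in HP.
    assert (0 <= h * h ^ n * Q)
      by (apply Rmult_le_pos; [apply Rmult_le_pos; [|apply pow_le] |]; lra).
    replace (P / 1) with P by field; lra.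
  -
    pose proof (A_interpolates a L (Derive f) _ Q h hh hL
                  (derivable_upto_Derive _ _ _ _ Hder)
                  (bounded_upto_Derive _ _ _ _ Hbnd)
                  (first_derivative_bound a L f P Q h hh hL Hder Hbnd HP HQ)
                  ltac:(rewrite Derive_n_Derive; exact HQ) j ltac:(lia) x hx) as H.
    rewrite Derive_n_Derive in H.
    set (D := first_constant) in *.
    assert (hD : 0 <= D) by (unfold D, first_constant; pose proof (A_nonneg 1%nat); lra).
    assert (hpj : 0 < h ^ j) by (apply pow_lt; lra).
    assert (Hpow : h ^ n = h ^ (n - j) * h ^ j)
      by (rewrite <- pow_add; f_equal; lia).
    assert (Hterm : 2 * (D * (P / h + h ^ n * Q)) / h ^ j + h ^ (n - j) * Q
                    = 2 * D * (P / (h * h ^ j)) + (2 * D + 1) * (h ^ (n - j) * Q)).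
    { rewrite Hpow; field; lra. }
    rewrite Hterm in H.
    assert (hPj : 0 <= P / (h * h ^ j)) by (apply Rdiv_le_0_compat; nra).
    assert (0 <= h ^ (n - j) * Q) by (apply Rmult_le_pos; [apply pow_le|]; lra).
    apply (Rle_trans _ _ _ H).
    pose proof (Rmult_le_pos _ _ (A_nonneg j) hPj); nra.
Qed.

End Step.

Lemma interpolation_exists n :
  (1 <= n)%nat -> exists A : nat -> R, (forall j, 0 <= A j) /\ interpolates n A.
Proof.
  induction n as [|n IH]; intros hn; [lia|].
  destruct (Nat.eq_dec n 0) as [->|hn0].
  - exists (fun _ => 1); split; [intros; lra | exact interpolates_1].
  - destruct (IH ltac:(lia)) as [A [HA0 HA]].
    exists (next_constants A); split.
    + exact (next_constants_nonneg A HA0).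
    + exact (interpolates_step n A ltac:(lia) HA0 HA).
Qed.

Lemma pow_le_of_le_Rpower k eps c0 b :
  0 < eps -> 1 / eps <= INR k -> 0 < c0 < 1 -> 0 < b ->
  b <= Rpower c0 eps -> b ^ k <= c0.
Proof.
  intros heps hk hc0 hb hbc.
  apply Rle_trans with (Rpower c0 eps ^ k); [apply pow_incr; lra|].
  rewrite <- Rpower_pow by (unfold Rpower; apply exp_pos).
  rewrite Rpower_mult.
  rewrite <- (Rpower_1 c0) at 2 by lra.
  assert (hln : ln c0 < 0) by (rewrite <- ln_1; apply ln_increasing; lra).
  assert (hek : 1 <= eps * INR k).
  { replace 1 with (eps * (1 / eps)) by (field; lra).
    apply Rmult_le_compat_l; lra. }
  unfold Rpower.
  destruct (Rle_lt_or_eq_dec (eps * INR k * ln c0) (1 * ln c0)) as [H|H];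
    [nra | left; apply exp_increasing, H | right; now rewrite H].
Qed.

Lemma bound_at_scale_b k m A c0 ck b :
  0 < b -> b ^ k <= c0 -> (m <= k)%nat -> 0 <= A ->
  A * (c0 / b ^ m + b ^ (k - m) * ck) <= c0 * (A * (1 + Rmax 0 ck)) * / b ^ m.
Proof.
  intros hb hbk hm hA.
  assert (hbm : 0 < b ^ m) by (apply pow_lt; lra).
  assert (hbkm : b ^ (k - m) <= c0 / b ^ m).
  { apply Rmult_le_reg_r with (b ^ m); [exact hbm|].
    rewrite <- pow_add; replace (k - m + m)%nat with k by lia.
    replace (c0 / b ^ m * b ^ m) with c0 by (field; lra); exact hbk. }
  pose proof (Rmax_l 0 ck); pose proof (Rmax_r 0 ck).
  pose proof (pow_le b (k - m) (Rlt_le _ _ hb)).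
  replace (c0 * (A * (1 + Rmax 0 ck)) * / b ^ m)
    with (A * (c0 / b ^ m + c0 / b ^ m * Rmax 0 ck)) by (field; lra).
  apply Rmult_le_compat_l; [exact hA|].
  apply Rplus_le_compat_l, Rle_trans with (b ^ (k - m) * Rmax 0 ck).
  - apply Rmult_le_compat_l; assumption.
  - apply Rmult_le_compat_r; assumption.
Qed.

Lemma Derive_n_vanishing_on_I a b g m x :
  (forall t, in_I a b t -> g t = 0) -> in_I a b x -> Derive_n g m x = 0.
Proof.
  intros Hg hx.
  rewrite (Derive_n_ext_loc g (fun _ => 0)).
  - destruct m; [reflexivity | apply Derive_n_const].
  - apply (filter_imp (fun u => a < u /\ u < a + b)); [exact Hg|].
    exact (open_and _ _ (open_gt a) (open_lt (a + b)) x hx).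
Qed.

Theorem lemma2p4 (k : nat) (eps : R) :
  0 < eps -> 1 / eps <= INR k ->
  exists Ct : (nat -> R) -> nat -> R,
    (forall c m, 0 <= Ct c m) /\
    (forall c c', (forall j, (1 <= j <= k)%nat -> c j <= c' j) ->
        forall m, (m <= k)%nat -> Ct c m <= Ct c' m) /\
    (forall (c : nat -> R) (a b : R) (g : R -> R),
        c 0%nat < 1 -> 0 < b -> b <= Rpower (c 0%nat) eps ->
        Ck_on k a b g ->
        (forall m, (m <= k)%nat -> supnorm_le a b (Derive_n g m) (c m)) ->
        forall m, (m <= k)%nat ->
          supnorm_le a b (Derive_n g m) (c 0%nat * Ct c m * / b ^ m)).
Proof.
  intros heps hk.
  assert (hk1 : (1 <= k)%nat).
  { destruct k; [|lia]. simpl in hk.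
    assert (0 < 1 / eps) by (apply Rdiv_lt_0_compat; lra). lra. }
  destruct (interpolation_exists k hk1) as [A [HA0 HA]].
  exists (fun c m => A m * (1 + Rmax 0 (c k))); split; [|split].
  - intros c m; apply Rmult_le_pos; [apply HA0|].
    pose proof (Rmax_l 0 (c k)); lra.
  - intros c c' Hc m hm; apply Rmult_le_compat_l; [apply HA0|].
    apply Rplus_le_compat_l, Rle_max_compat_l, Hc; lia.
  - intros c a b g hc0 hb hbc [Hder _] Hbd m hm x hx.
    pose proof (supnorm_nonneg a b _ _ hb (Hbd 0%nat ltac:(lia))) as hc0pos.
    destruct (Rle_lt_or_eq_dec 0 (c 0%nat) hc0pos) as [hpos|hzero].
    +
      eapply Rle_trans.
      * apply (HA a b g (c 0%nat) (c k) b hb (Rle_refl b)); auto.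
        -- intros j y hj hy; exact (Hder (S j) y hj hy).
        -- intros j hj; exists (c j); apply Hbd, hj.
        -- apply (Hbd 0%nat); lia.
      * apply bound_at_scale_b; [exact hb | | exact hm | apply HA0].
        exact (pow_le_of_le_Rpower k eps (c 0%nat) b heps hk ltac:(lra) hb hbc).
    + (* c_0 = 0: g vanishes on I *)
      rewrite (Derive_n_vanishing_on_I a b g m x), Rabs_R0, <- hzero; [right; ring| |exact hx].
      intros t ht; pose proof (Hbd 0%nat ltac:(lia) t ht) as Ht; simpl in Ht.
      rewrite <- hzero in Ht; pose proof (Rabs_pos (g t)).
      apply Rabs_eq_0; lra.
Qed.
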